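(* Let $X=\mathbb{CP}^2\#n\overline{\mathbb{CP}}^2$, $k$ a positive integer, $U_5=\{A\in H_2(X;\mathbb{Z}):\mathrm{ind}(A)\ge2k,\ A\cdot H>0\}$ with the preorder $\ge$ below. Every minimal element $A=aH-\sum_{i=1}^nb_iE_i$ of $U_5$ is reduced and satisfies $3a-\sum_{i=1}^nb_i\ge1$.
   Context: $K_0=-3H+E_1+\cdots+E_n$, $\mathrm{ind}(A):=A^2-K_0\cdot A$. With $H^2(X;\mathbb{R})\cong\mathbb{R}^{n+1}$ via $(x_0,\dots,x_n)\leftrightarrow x_0PD(H)-\sum x_iPD(E_i)$, the reduced cone $\mathcal{P}$ is: $0<x_1<x_0$ ($n=1$); $0<x_2\le x_1$, $x_1+x_2<x_0$ ($n=2$); $0<x_n\le\cdots\le x_1$, $x_1+x_2+x_3\le x_0$, $\sum x_i^2<x_0^2$ ($n\ge3$); and $\mathcal{P}^{c_1>0}=\{[\omega]\in\mathcal{P}:\omega(3H-\sum E_i)>0\}$. For $A,B\in U_5$, $A\ge B$ means $\omega(A)\ge\omega(B)$ for all $[\omega]\in\mathcal{P}^{c_1>0}$; $A$ is minimal if there is no other $B\in U_5$, $B\ne A$, with $A\ge B$. A class $aH-\sum b_iE_i$ is reduced if $a>0$, $b_1\ge b_2\ge\cdots\ge b_n\ge0$ and $a\ge b_1+b_2+b_3$. *)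

From HB Require Import structures.
From mathcomp Require Import all_boot all_order all_algebra.
From mathcomp Require Import reals.
Set Implicit Arguments. Unset Strict Implicit. Unset Printing Implicit Defensive.
Import Order.TTheory GRing.Theory Num.Theory.
Local Open Scope ring_scope.

(* X = CP^2 # n CPbar^2.  A vector indexed by 'I_n.+1 encodes coordinates
   (c_0, c_1, ..., c_n).  A homology class A : hcls n encodes
   A = c_0 H - sum_i c_i E_i, i.e. a = c_0, b_i = c_i.
   A real cohomology class x : {ffun 'I_n.+1 -> R} encodes
   x_0 PD(H) - sum_i x_i PD(E_i). *)
Definition hcls (n : nat) := {ffun 'I_n.+1 -> int}.

Definition co (T : nmodType) (n : nat) (f : {ffun 'I_n.+1 -> T}) (k : nat) : T :=
  if (k < n.+1)%N then f (inord k) else 0.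

(* intersection form: H^2 = 1, E_i^2 = -1, H.E_i = 0, E_i.E_j = 0 (i<>j) *)
Definition dot (n : nat) (A B : hcls n) : int :=
  co A 0 * co B 0 - \sum_(1 <= i < n.+1) co A i * co B i.

(* H and K_0 = -3H + E_1 + ... + E_n *)
Definition Hcls (n : nat) : hcls n := [ffun i : 'I_n.+1 => if val i == 0%N then 1 else 0].
Definition K0 (n : nat) : hcls n := [ffun i : 'I_n.+1 => if val i == 0%N then -3 else -1].
(* 3H - E_1 - ... - E_n  (= c_1 = -K_0) *)
Definition c1cls (n : nat) : hcls n := [ffun i : 'I_n.+1 => if val i == 0%N then 3 else 1].

Definition ind (n : nat) (A : hcls n) : int := dot A A - dot (K0 n) A.

Definition pairing (R : realType) (n : nat) (x : {ffun 'I_n.+1 -> R}) (A : hcls n) : R :=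
  co x 0 * (co A 0)%:~R - \sum_(1 <= i < n.+1) co x i * (co A i)%:~R.

Definition inP (R : realType) (n : nat) (x : {ffun 'I_n.+1 -> R}) : Prop :=
  if n == 1%N then 0 < co x 1 /\ co x 1 < co x 0
  else if n == 2%N then
    [/\ 0 < co x 2, co x 2 <= co x 1 & co x 1 + co x 2 < co x 0]
  else
    [/\ 0 < co x n,
        (forall i : nat, (1 <= i < n)%N -> co x i.+1 <= co x i),
        co x 1 + co x 2 + co x 3 <= co x 0
      & \sum_(1 <= i < n.+1) co x i ^+ 2 < co x 0 ^+ 2].

Definition inPc1 (R : realType) (n : nat) (x : {ffun 'I_n.+1 -> R}) : Prop :=
  inP x /\ 0 < pairing x (c1cls n).

Definition U5 (n k : nat) (A : hcls n) : Prop :=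
  (2 * k)%:Z <= ind A /\ 0 < dot A (Hcls n).

Definition cls_ge (R : realType) (n : nat) (A B : hcls n) : Prop :=
  forall x : {ffun 'I_n.+1 -> R}, inPc1 x -> pairing x B <= pairing x A.

Definition minimal_U5 (R : realType) (n k : nat) (A : hcls n) : Prop :=
  U5 k A /\ ~ (exists B : hcls n, [/\ U5 k B, B <> A & cls_ge R A B]).

Definition reduced (n : nat) (A : hcls n) : Prop :=
  [/\ 0 < co A 0,
      (forall i : nat, (1 <= i < n)%N -> co A i.+1 <= co A i),
      0 <= co A n
    & co A 1 + co A 2 + co A 3 <= co A 0].

From HB Require Import structures.
From mathcomp Require Import all_boot all_order all_algebra.
From mathcomp Require Import reals.
From mathcomp Require Import ring zify.
Import Order.TTheory GRing.Theory Num.Theory.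
Set Implicit Arguments. Unset Strict Implicit.
Local Open Scope ring_scope.

(* The index ind(A) = A.A - K_0.A satisfies the polarization
   identity  ind(A + D) = ind(A) + ind(D) + 2 A.D.  Suppose A is minimal in
   U_5 and D is a nonzero class with ind(D) + 2 A.D >= 0 and omega(D) <= 0 on
   the whole cone P^{c1>0}.  Then B = A + D has ind(B) >= ind(A) and A >= B,
   so minimality forces B.H <= 0; but a class of degree d has index at most
   d(d+3), which is <= 0 < 2k when -2 <= d <= 0.  Hence no such "descent" D
   with D.H >= -3 exists (lemma no_descent).  Each inequality in the
   conclusion, if violated, produces a descent:
     b_j < 0            :  D = -E_j             (ind D = -2, A.D = -b_j),
     b_i < b_(i+1)      :  D = E_(i+1) - E_i    (ind D = -2),
     b_1+b_2+b_3 > a    :  D = E_1+E_2+E_3 - H  (ind D = -2),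
     3a - sum b_i <= 0  :  D = K_0 = -c_1       (ind D = 0, omega(D) < 0). *)

Section Coordinates.
Variable n : nat.

Lemma co_out (T : nmodType) (f : {ffun 'I_n.+1 -> T}) k :
  (n < k)%N -> co f k = 0.
Proof. by move=> hk; rewrite /co ltnNge hk. Qed.

Lemma co0 (T : nmodType) k : co (0 : {ffun 'I_n.+1 -> T}) k = 0.
Proof. by rewrite /co; case: ifP; rewrite ?ffunE. Qed.

Lemma coD (T : nmodType) (f g : {ffun 'I_n.+1 -> T}) k :
  co (f + g) k = co f k + co g k.
Proof. by rewrite /co; case: ifP; rewrite ?ffunE ?addr0. Qed.

Lemma coN (T : zmodType) (f : {ffun 'I_n.+1 -> T}) k : co (- f) k = - co f k.
Proof. by rewrite /co; case: ifP; rewrite ?ffunE ?oppr0. Qed.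

(* The exceptional class E_j (its coefficient c_j is -1); for j > n it is 0. *)
Definition Ecls (j : nat) : hcls n :=
  [ffun i : 'I_n.+1 => if val i == j then -1 else 0].

Lemma co_Ecls j i : co (Ecls j) i = if (i == j) && (i <= n)%N then -1 else 0.
Proof.
rewrite /co ltnS; case: leqP => hi; last by rewrite andbF.
by rewrite ffunE /= inordK ?andbT.
Qed.

Lemma co_H i : co (Hcls n) i = (i == 0%N)%:R.
Proof.
rewrite /co; case: ltnP => hi; first by rewrite ffunE /= inordK //; case: (i == 0%N).
by case: i hi.
Qed.

Lemma co_K0_0 : co (K0 n) 0 = -3.
Proof. by rewrite /co ffunE /= inordK. Qed.

Lemma co_K0 i : (1 <= i <= n)%N -> co (K0 n) i = -1.
Proof. by case/andP=> h1 h2; rewrite /co ltnS h2 ffunE /= inordK //; case: i h1 {h2}. Qed.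

Lemma K0_c1 : K0 n = - c1cls n.
Proof. by apply/ffunP=> i; rewrite !ffunE; case: (val i == 0%N). Qed.

End Coordinates.

Lemma sum_point (T : nmodType) (m p j : nat) (F : nat -> T) :
  (forall i, i != j -> F i = 0) ->
  \sum_(m <= i < p) F i = if (m <= j < p)%N then F j else 0.
Proof. by move=> F0; rewrite -(big_nat1_eq (@GRing.add T)) (big_rmcond (pred1 j)). Qed.

Section Intersection.
Variable n : nat.
Implicit Types A B C : hcls n.

Lemma dotC A B : dot A B = dot B A.
Proof. by rewrite /dot mulrC; congr (_ - _); apply: eq_bigr => i _; rewrite mulrC. Qed.

Lemma dotDr A B C : dot A (B + C) = dot A B + dot A C.
Proof.
rewrite /dot coD; under eq_bigr do rewrite coD mulrDr.
rewrite big_split /=; ring.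
Qed.

Lemma dotNr A B : dot A (- B) = - dot A B.
Proof.
rewrite /dot coN; under eq_bigr do rewrite coN mulrN.
rewrite sumrN; ring.
Qed.

Lemma dotDl A B C : dot (A + B) C = dot A C + dot B C.
Proof. by rewrite dotC dotDr !(dotC C). Qed.

Lemma dotNl A B : dot (- A) B = - dot A B.
Proof. by rewrite dotC dotNr dotC. Qed.

Lemma dotH A : dot A (Hcls n) = co A 0.
Proof.
rewrite /dot co_H mulr1 big_nat_cond big1 ?subr0 // => i /andP[/andP[hi _] _].
by rewrite co_H; case: i hi => // i _; rewrite mulr0.
Qed.

Lemma dotE A j : (1 <= j)%N -> dot A (Ecls n j) = co A j.
Proof.
move=> hj; rewrite /dot co_Ecls; case: j hj => // j _ /=; rewrite mulr0 sub0r.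
rewrite (@sum_point _ _ _ j.+1) => [|i /negbTE ij]; last by rewrite co_Ecls ij mulr0.
rewrite co_Ecls eqxx /= ltnS; case: leqP => hj; first by rewrite co_out ?oppr0.
by rewrite mulrN1 opprK.
Qed.

Lemma dotEH j : (1 <= j)%N -> dot (Ecls n j) (Hcls n) = 0.
Proof. by rewrite dotH co_Ecls; case: j. Qed.

Lemma dotK0 A : dot A (K0 n) = \sum_(1 <= i < n.+1) co A i - 3 * co A 0.
Proof.
rewrite /dot co_K0_0; under eq_big_nat => i hi do rewrite co_K0 // mulrN1.
rewrite sumrN; ring.
Qed.

Lemma ind_add A B : ind (A + B) = ind A + ind B + 2 * dot A B.
Proof. by rewrite /ind !dotDl !dotDr (dotC B A); ring. Qed.

Lemma ind_opp A : ind (- A) = ind A + 2 * dot (K0 n) A.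
Proof. by rewrite /ind dotNl dotNr !dotNr opprK; ring. Qed.

Lemma ind0 : ind (0 : hcls n) = 0.
Proof.
have := ind_add 0 0; rewrite addr0 /dot !co0 mul0r big1 => [|i _]; last first.
  by rewrite co0 mul0r.
lia.
Qed.

Lemma ind_coord A :
  ind A = co A 0 * (co A 0 + 3) - \sum_(1 <= i < n.+1) co A i * (co A i + 1).
Proof.
rewrite /ind (dotC (K0 n)) dotK0 /dot.
under [X in _ = _ - X]eq_bigr do rewrite mulrDr mulr1.
rewrite big_split /=; ring.
Qed.

(* Since b(b+1) >= 0 for integers, a class of degree d has index <= d(d+3). *)
Lemma ind_le_deg A : ind A <= co A 0 * (co A 0 + 3).
Proof. by rewrite ind_coord gerBl; apply: sumr_ge0 => i _; nia. Qed.

(* Exceptional classes have index 0, since E_j.E_j = K_0.E_j. *)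
Lemma ind_Ecls j : (1 <= j)%N -> ind (Ecls n j) = 0.
Proof.
move=> hj; rewrite /ind !dotE // co_Ecls eqxx /=.
by case: leqP => hjn; [rewrite co_K0 ?hj // subrr | rewrite co_out ?subr0].
Qed.

Lemma ind_H : ind (Hcls n) = 4.
Proof. by rewrite /ind !dotH co_H co_K0_0. Qed.

End Intersection.

Section Periods.
Variables (R : realType) (n : nat) (x : {ffun 'I_n.+1 -> R}).
Implicit Types A B : hcls n.

Lemma pairingD A B : pairing x (A + B) = pairing x A + pairing x B.
Proof.
rewrite /pairing coD intrD; under eq_bigr do rewrite coD intrD mulrDr.
rewrite big_split /=; ring.
Qed.

Lemma pairingN A : pairing x (- A) = - pairing x A.
Proof.
rewrite /pairing coN intrN; under eq_bigr do rewrite coN intrN mulrN.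
rewrite sumrN; ring.
Qed.

Lemma pairingH : pairing x (Hcls n) = co x 0.
Proof.
rewrite /pairing co_H mulr1 big_nat_cond big1 ?subr0 // => i /andP[/andP[hi _] _].
by rewrite co_H; case: i hi => // i _; rewrite mulr0.
Qed.

Lemma pairingE j : (1 <= j)%N -> pairing x (Ecls n j) = co x j.
Proof.
move=> hj; rewrite /pairing co_Ecls; case: j hj => // j _ /=; rewrite mulr0 sub0r.
rewrite (@sum_point _ _ _ j.+1) => [|i /negbTE ij]; last by rewrite co_Ecls ij mulr0.
rewrite co_Ecls eqxx /= ltnS; case: leqP => hj; first by rewrite co_out ?oppr0.
by rewrite mulrN1 opprK.
Qed.

End Periods.

Section ReducedCone.
Variables (R : realType) (n : nat) (x : {ffun 'I_n.+1 -> R}).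
Hypothesis xP : inP x.

Lemma inP_sorted i : (1 <= i < n)%N -> co x i.+1 <= co x i.
Proof.
move: xP; rewrite /inP; case: (n =P 1%N) => [e _ hi|_]; first by exfalso; lia.
case: (n =P 2%N) => [e|_]; last by case=> _ h _ _; apply: h.
by move=> [_ h _] hi; have -> : i = 1%N by lia.
Qed.

Lemma inP_triple : co x 1 + co x 2 + co x 3 <= co x 0.
Proof.
move: xP; rewrite /inP; case: (n =P 1%N) => [e|_].
  by subst n => -[_ /ltW]; rewrite (@co_out _ _ _ 2) ?(@co_out _ _ _ 3) // !addr0.
case: (n =P 2%N) => [e|_]; last by case.
by subst n => -[_ _ /ltW]; rewrite (@co_out _ _ _ 3) // addr0.
Qed.

Lemma inP_last_pos : 0 < co x n.
Proof.
move: xP; rewrite /inP; case: (n =P 1%N) => [e|_]; first by subst n; case.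
by case: (n =P 2%N) => [e|_]; [subst n|]; case.
Qed.

Lemma inP_nonneg j : (1 <= j <= n)%N -> 0 <= co x j.
Proof.
move=> hj; apply: le_trans (ltW inP_last_pos) _.
have dec d : (d < n)%N -> co x n <= co x (n - d).
  elim: d => [|d IH] hd; first by rewrite subn0.
  apply: le_trans (IH (ltnW hd)) _; have -> : (n - d = (n - d.+1).+1)%N by lia.
  apply: inP_sorted; lia.
by have := dec (n - j)%N; rewrite subKn; [apply; lia | lia].
Qed.

End ReducedCone.

Section MinimalClass.
Variables (R : realType) (n k : nat) (A : hcls n).
Hypotheses (k_gt0 : (0 < k)%N) (Amin : minimal_U5 R k A).

Lemma no_descent (D : hcls n) :
  D <> 0 -> -3 <= dot D (Hcls n) -> 0 <= ind D + 2 * dot A D ->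
  (forall x : {ffun 'I_n.+1 -> R}, inPc1 x -> pairing x D <= 0) -> False.
Proof.
move=> D0 DH Dind Dper; have [[indA AH] Anot] := Amin.
have indB : ind A <= ind (A + D) by rewrite ind_add; lia.
have [BH|BH] := ltP 0 (dot (A + D) (Hcls n)).
  apply: Anot; exists (A + D); split.
  - by split=> //; apply: le_trans indB.
  - by move/(congr1 (fun B => B - A)); rewrite addrC addKr subrr.
  - by move=> x /Dper; rewrite pairingD gerDl.
have := ind_le_deg (A + D); move: BH indB indA DH AH; rewrite !dotH coD; nia.
Qed.

(* b_j >= 0, via the descent D = -E_j. *)
Lemma minimal_exc_nonneg j : (1 <= j <= n)%N -> 0 <= co A j.
Proof.
case/andP=> j1 jn; rewrite leNgt; apply/negP => bneg.
have indD : ind (- Ecls n j) = -2 by rewrite ind_opp ind_Ecls // dotE // co_K0 ?j1.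
apply: (@no_descent (- Ecls n j)).
- by move/(congr1 (@ind n)); rewrite indD ind0.
- by rewrite dotNl dotEH.
- by rewrite indD dotNr dotE //; lia.
- by move=> x [xP _]; rewrite pairingN pairingE // oppr_le0 (inP_nonneg xP) ?j1.
Qed.

(* b_(i+1) <= b_i, via the descent D = E_(i+1) - E_i. *)
Lemma minimal_exc_sorted i : (1 <= i < n)%N -> co A i.+1 <= co A i.
Proof.
move=> hi; have [i1 iN] : (1 <= i)%N /\ (i.+1 <= n)%N by lia.
rewrite leNgt; apply/negP => bi.
pose D := Ecls n i.+1 - Ecls n i.
have indD : ind D = -2.
  rewrite ind_add ind_opp !ind_Ecls // dotNr !dotE // co_K0 ?i1 ?(ltnW iN) //.
  by rewrite co_Ecls (ltn_eqF (ltnSn i)).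
apply: (@no_descent D).
- by move/(congr1 (@ind n)); rewrite indD ind0.
- by rewrite dotDl dotNl !dotEH.
- by rewrite indD dotDr dotNr !dotE //; lia.
- move=> x [xP _]; rewrite pairingD pairingN !pairingE // subr_le0.
  exact: inP_sorted xP _ hi.
Qed.

(* b_1 + b_2 + b_3 <= a, via the descent D = E_1 + E_2 + E_3 - H. *)
Lemma minimal_triple : co A 1 + co A 2 + co A 3 <= co A 0.
Proof.
rewrite leNgt; apply/negP => b123.
pose D := Ecls n 1 + Ecls n 2 + Ecls n 3 - Hcls n.
have indD : ind D = -2.
  rewrite ind_add ind_opp ind_H !ind_add !ind_Ecls // !dotDl !dotNr !dotE //.
  by rewrite !dotEH // dotH co_K0_0 !co_Ecls.
apply: (@no_descent D).
- by move/(congr1 (@ind n)); rewrite indD ind0.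
- by rewrite !dotDl dotNl !dotEH // dotH co_H.
- by rewrite indD !dotDr dotNr !dotE // dotH; lia.
- move=> x [xP _]; rewrite !pairingD pairingN !pairingE // pairingH subr_le0.
  exact: inP_triple.
Qed.

(* c_1(A) = 3a - sum b_i >= 1, via the descent D = K_0. *)
Lemma minimal_c1_pos : 1 <= 3 * co A 0 - \sum_(1 <= i < n.+1) co A i.
Proof.
rewrite leNgt; apply/negP => c1A.
apply: (@no_descent (K0 n)).
- by move/(congr1 (fun B => dot B (Hcls n))); rewrite !dotH co_K0_0 co0.
- by rewrite dotH co_K0_0.
- by rewrite /ind subrr dotK0; lia.
- by move=> x [_ c1x]; rewrite K0_c1 pairingN oppr_le0 ltW.
Qed.

End MinimalClass.

Theorem lemma4p4 (R : realType) (n k : nat) (A : hcls n) :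
  (1 <= n)%N -> (0 < k)%N -> minimal_U5 R k A ->
  reduced A /\ 1 <= 3 * co A 0 - \sum_(1 <= i < n.+1) co A i.
Proof.
move=> n_ge1 k_gt0 Amin; split; last exact: minimal_c1_pos k_gt0 Amin.
have [[_ AH] _] := Amin.
split.
- by rewrite -dotH.
- exact: minimal_exc_sorted k_gt0 Amin.
- by apply: (minimal_exc_nonneg k_gt0 Amin); rewrite n_ge1 leqnn.
- exact: minimal_triple k_gt0 Amin.
Qed.
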